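(* Let $\mathcal{T}=(V,A,E,f,q,v_0)$ be a decorated rooted tree that has negative determinants and satisfies $f(A)\subseteq\mathbb{N}=\{0,1,2,\dots\}$. (a) If $v,v'\in V$ satisfy $v<v'$, then: (i) if $N_v<0$ then $N_{v'}<0$; (ii) if $N_v\le0$ then $N_{v'}\le0$; (iii) if $N_v\le0$ and there exists $\alpha\in A\setminus A_0$ with $\alpha>v'$, then $N_{v'}<0$. (b) The set $\{v\in V: N_v\ge0\}$ is connected. (c) The set $\{v\in V: N_v>0\}$ is connected.
   Context: A graph is a pair $(X_0,X_1)$ of finite sets such that each element of $X_1$ (an edge) is a $2$-element subset of $X_0$; elements of $X_0$ are cells. A path is a tuple $(x_0,\dots,x_n)$ ($n\ge0$) of cells with $\{x_i,x_{i+1}\}$ an edge for each $i<n$, these edges pairwise distinct; a cell/edge is in the path if it is some $x_i$ / some $\{x_i,x_{i+1}\}$. The graph is a tree if any two cells $x,y$ are joined by a unique path $\gamma_{x,y}$. A decorated tree is $(V,A,E,f,q)$ with $V$ (vertices), $A$ (arrows) finite disjoint sets, $(V\cup A,E)$ a tree, every arrow contained in exactly one edge, $f:A\to\mathbb{Z}$, $q(e,x)\in\mathbb{Z}$ for each $e\in E$, $x\in e$, with $q(e,\alpha)=1$ for $\alpha\in A$, and for each $v\in V$ and distinct edges $e,e'\ni v$, $\gcd(q(e,v),q(e',v))=1$. $A_0=\{\alpha\in A:f(\alpha)=0\}$. For $x\in V\cup A$, $e\ni x$: $Q(e,x)=\prod q(e',x)$ over edges $e'\ne e$ containing $x$ (empty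 product $=1$); for an edge $e=\{x,y\}$, $\det(e)=q(e,x)q(e,y)-Q(e,x)Q(e,y)$. An edge $\varepsilon$ is incident to a path $\gamma$ if it is not in $\gamma$ but contains a cell $u$ of $\gamma$; $q(\varepsilon,\gamma):=q(\varepsilon,u)$. For $v\ne\alpha$, $v\in V\cup A$, $\alpha\in A$: $x_{v,\alpha}=f(\alpha)\prod_\varepsilon q(\varepsilon,\gamma_{v,\alpha})$ over edges incident to $\gamma_{v,\alpha}$. For $v\in V\cup A_0$, $N_v=\sum_{\alpha\in A\setminus A_0}x_{v,\alpha}$. A root of $(V,A,E,f,q)$ is a vertex $v_0$ with $q(e,v_0)=1$ for every edge $e\ni v_0$ such that for every $v\in V\setminus\{v_0\}$, all edges $e\ni v$ not in $\gamma_{v_0,v}$ satisfy $q(e,v)\ge1$ and at most one of them satisfies $q(e,v)\ne1$. A decorated rooted tree is $(V,A,E,f,q,v_0)$ with $v_0$ a root. For distinct $x,y\in V\cup A$, $x<y$ means $x$ is in $\gamma_{v_0,y}$. $\mathcal{T}$ has negative determinants if $\det(e)<0$ for every edge $e=\{x,y\}$ with $x,y\in V$. A subset $S\subseteq V\cup A$ is connected if every path $(x_0,\dots,x_n)$ with $x_0,x_n\in S$ has $x_i\in S$ for all $0<i<n$. *)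

From Stdlib Require Import ClassicalEpsilon.
From HB Require Import structures.
From mathcomp Require Import all_boot all_order all_algebra.
Set Implicit Arguments. Unset Strict Implicit. Unset Printing Implicit Defensive.
Import Order.TTheory GRing.Theory Num.Theory.
Local Open Scope ring_scope.

Section DecoratedTrees.
Variable T : finType.
Implicit Types (V A : {set T}) (E : {set {set T}}) (f : T -> int)
  (q : {set T} -> T -> int).

Definition pedges (x : T) (s : seq T) : seq {set T} :=
  pairmap (fun a b => [set a; b]) x s.

Definition is_path E (p : seq T) : bool :=
  if p is x :: s then all (fun e => e \in E) (pedges x s) && uniq (pedges x s)
  else false.

Definition path_edges (p : seq T) : seq {set T} :=
  if p is x :: s then pedges x s else [::].

Definition path_from E (x y : T) (p : seq T) : Prop :=
  [/\ is_path E p, head x p = x & last x p = y].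

Definition is_tree (X : {set T}) E : Prop :=
  (forall e, e \in E -> (e \subset X) /\ #|e| = 2%N) /\
  forall x y, x \in X -> y \in X -> exists! p : seq T, path_from E x y p.

Definition gamma E (x y : T) : seq T :=
  epsilon (inhabits [::]) (fun p => path_from E x y p).

Definition decorated_tree V A E f q : Prop :=
  [/\ [disjoint V & A] /\ V :|: A = [set: T], is_tree [set: T] E,
      (forall a, a \in A -> #|[set e in E | a \in e]| = 1%N),
      (forall e a, e \in E -> a \in A -> a \in e -> q e a = 1) &
      (forall v e e', v \in V -> e \in E -> e' \in E -> e != e' ->
         v \in e -> v \in e' -> coprimez (q e v) (q e' v))].

Definition Qf E q (e : {set T}) (x : T) : int :=
  \prod_(e' in E | (x \in e') && (e' != e)) q e' x.

Definition detf E q (x y : T) : int :=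
  let e := [set x; y] in q e x * q e y - Qf E q e x * Qf E q e y.

Definition incident E (eps : {set T}) (g : seq T) : bool :=
  [&& eps \in E, eps \notin path_edges g & has (fun u => u \in eps) g].

(* q(eps, gamma) := q(eps, u) for the cell u of gamma in eps *)
Definition qinc q (eps : {set T}) (g : seq T) : int :=
  oapp (q eps) 1 [pick u | (u \in g) && (u \in eps)].

Definition xf E f q (v a : T) : int :=
  let g := gamma E v a in
  f a * \prod_(eps in E | incident E eps g) qinc q eps g.

Definition Nf A E f q (v : T) : int :=
  \sum_(a in A | f a != 0) xf E f q v a.

Definition is_root V A E f q (v0 : T) : Prop :=
  [/\ v0 \in V,
      (forall e, e \in E -> v0 \in e -> q e v0 = 1) &
      forall v, v \in V -> v != v0 ->
        (forall e, e \in E -> v \in e -> e \notin path_edges (gamma E v0 v) ->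
            1 <= q e v) /\
        (#|[set e in E | [&& v \in e, e \notin path_edges (gamma E v0 v)
                            & q e v != 1]]| <= 1)%N].

Definition decorated_rooted_tree V A E f q v0 : Prop :=
  decorated_tree V A E f q /\ is_root V A E f q v0.

(* x < y : x is in gamma_{v0,y} (x, y distinct) *)
Definition tlt E (v0 x y : T) : bool := (x != y) && (x \in gamma E v0 y).

Definition negative_determinants V E q : Prop :=
  forall x y, x \in V -> y \in V -> [set x; y] \in E -> detf E q x y < 0.

Definition connected E (S : {set T}) : Prop :=
  forall (x : T) (s : seq T), is_path E (x :: s) -> x \in S -> last x s \in S ->
    forall i, (0 < i < size s)%N -> nth x (x :: s) i \in S.

End DecoratedTrees.

From Stdlib Require Import ClassicalEpsilon.
From mathcomp Require Import all_boot all_order all_algebra.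
From mathcomp Require Import ring lra.
Set Implicit Arguments. Unset Strict Implicit. Unset Printing Implicit Defensive.
Import Order.TTheory GRing.Theory Num.Theory.
Local Open Scope ring_scope.

(* Let p be the parent of a vertex v on the path from the root and e = {p, v}.
   Splitting off the factor of e in the incident-edge products gives, for every
   arrow a, q(e,p) x_{v,a} = Q(e,v) x_{p,a} + det(e) c_a, where c_a = 0 unless v
   lies on gamma_{v0,a}, and then c_a = f(a) times a product of q's over edges
   leaving the root path, which the root condition makes positive.  Summing,
   q(e,p) N_v = Q(e,v) N_p + det(e) D with q(e,p), Q(e,v) > 0, det(e) < 0 and
   D >= 0 (D > 0 if a nonzero arrow lies below v), so N <= 0 and N < 0 propagate
   from p to v, and by induction from any vertex to its descendants.  In a tree,
   every interior cell of a path is a proper ancestor of one of its endpoints, so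
   any set of cells closed under taking ancestors is connected; by (a), the sets
   {N >= 0} and {N > 0} are closed under taking ancestors. *)

Lemma take_index_rcons (T : eqType) (u : T) s :
  u \in s -> take (index u s).+1 s = rcons (take (index u s) s) u.
Proof. by move=> us; rewrite (take_nth u) ?index_mem // nth_index. Qed.

Section Paths.
Variables (T : finType) (E : {set {set T}}).

Lemma pedges_take (x : T) s k : pedges x (take k s) = take k (pedges x s).
Proof. by elim: s x k => [|y s IH] x [|k] //=; rewrite /pedges /= -IH. Qed.

Lemma pedges_rcons (x : T) s y :
  pedges x (rcons s y) = rcons (pedges x s) [set last x s; y].
Proof. by rewrite /pedges -cats1 pairmap_cat cats1. Qed.

Lemma pedges_cat (x : T) s t : pedges x (s ++ t) = pedges x s ++ pedges (last x s) t.
Proof. exact: pairmap_cat. Qed.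

Lemma pedges_rev (x : T) s :
  pedges (last x s) (rev (belast x s)) = rev (pedges x s).
Proof.
elim: s x => [|y s IH] x //=.
rewrite rev_cons pedges_rcons IH /pedges /= rev_cons setUC; congr rcons.
by case: s {IH} => [|z s] //=; rewrite rev_cons last_rcons.
Qed.

Lemma mem_pedges (x : T) s e c : e \in pedges x s -> c \in e -> c \in x :: s.
Proof.
elim: s x => [|y s IH] x //=; rewrite in_cons => /orP[/eqP-> | /IH He /He].
  by rewrite in_set2 !in_cons => /orP[]->; rewrite ?orbT.
by rewrite (in_cons x) => ->; rewrite orbT.
Qed.

Lemma path_edges_sub g e : is_path E g -> e \in path_edges g -> e \in E.
Proof. by case: g => [|x s] //= /andP[/allP HE _] /HE. Qed.

Lemma notin_path_edges (g : seq T) (e : {set T}) c :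
  c \in e -> c \notin g -> e \notin path_edges g.
Proof. by case: g => [|x s] // ce; apply: contra => /mem_pedges; apply. Qed.

Lemma pedges_cover (x : T) s u : s != [::] -> u \in x :: s ->
  exists2 e, e \in pedges x s & u \in e.
Proof.
elim: s x => [|y s IH] x // _; rewrite in_cons => /predU1P[->|].
  by exists [set x; y]; rewrite ?mem_head ?set21.
case: s IH => [_|z s IH].
  by rewrite mem_seq1 => /eqP->; exists [set x; y]; rewrite ?mem_head ?set22.
by case/IH=> // e He ue; exists e; rewrite // in_cons He orbT.
Qed.

Lemma path_take (x : T) s k : is_path E (x :: s) -> is_path E (x :: take k s).
Proof.
rewrite /= pedges_take => /andP[/allP HE Hu]; rewrite take_uniq // andbT.
by apply/allP => e /mem_take /HE.
Qed.

Lemma path_prefix (x : T) s t : is_path E (x :: s ++ t) -> is_path E (x :: s).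
Proof. by move/(path_take (size s)); rewrite take_size_cat. Qed.

Lemma path_behead (x y : T) s : is_path E (x :: y :: s) -> is_path E (y :: s).
Proof. by case/andP => /andP[_ ?] /andP[_ ?]; apply/andP. Qed.

Lemma path_drop p k : is_path E p -> (k < size p)%N -> is_path E (drop k p).
Proof.
elim: k p => [|k IH] p; first by rewrite drop0.
by case: p => [|x [|y s]] //= /path_behead /IH; apply.
Qed.

Lemma path_suffix s (x : T) t : is_path E (s ++ x :: t) -> is_path E (x :: t).
Proof.
move=> Hp; have := path_drop (k := size s) Hp; rewrite drop_size_cat //; apply.
by rewrite size_cat /= addnS ltnS leq_addr.
Qed.

Lemma path_rev p : is_path E p -> is_path E (rev p).
Proof.
case: p => [|x s] // Hp.
by rewrite (lastI x s) rev_rcons /= pedges_rev all_rev rev_uniq.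
Qed.

End Paths.

Section Trees.
Variables (T : finType) (E : {set {set T}}).
Hypothesis Htree : is_tree [set: T] E.

Lemma edge_card e : e \in E -> #|e| = 2%N.
Proof. by case/(Htree.1 e). Qed.

Lemma edge_neq x y : [set x; y] \in E -> x != y.
Proof. by move/edge_card; rewrite cards2; case: (x != y). Qed.

Lemma edge_other e z : e \in E -> exists2 c, c \in e & c != z.
Proof.
move=> /edge_card /eqP /cards2P [a [b [ab ->]]].
have [<-|az] := eqVneq a z; last by exists a; rewrite ?set21.
by exists b; rewrite ?set22 // eq_sym.
Qed.

Lemma edge_eq e a b : e \in E -> a \in e -> b \in e -> a != b -> e = [set a; b].
Proof.
move=> /edge_card He ae be ab; apply/esym/eqP; rewrite eqEcard He cards2 ab.
by rewrite subUset !sub1set ae be.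
Qed.

Lemma gammaP x y : path_from E x y (gamma E x y).
Proof.
apply: epsilon_spec.
by have [p [Hp _]] := Htree.2 x y (in_setT x) (in_setT y); exists p.
Qed.

Lemma gamma_eq x y p : path_from E x y p -> gamma E x y = p.
Proof.
have [p0 [_ Hu]] := Htree.2 x y (in_setT x) (in_setT y).
by move=> Hp; rewrite -(Hu _ Hp) -(Hu _ (gammaP x y)).
Qed.

Lemma gamma_path x y : is_path E (gamma E x y).
Proof. by case: (gammaP x y). Qed.

Lemma gamma_refl x : gamma E x x = [:: x].
Proof. exact: gamma_eq. Qed.

Lemma gamma_cons x y : exists2 s, gamma E x y = x :: s & last x s = y.
Proof.
by case: (gammaP x y); case: (gamma E x y) => [|z s] //= _ <- <-; exists s.
Qed.

Lemma path_gamma (x : T) s : is_path E (x :: s) -> gamma E x (last x s) = x :: s.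
Proof. by move=> Hp; apply: gamma_eq. Qed.

Lemma mem_gamma_last x y : y \in gamma E x y.
Proof. by have [s -> <-] := gamma_cons x y; rewrite mem_last. Qed.

Lemma path_notin (x : T) s : is_path E (x :: s) -> x \notin s.
Proof.
move=> Hp; apply/negP => xs.
have := path_gamma (path_take (index x s).+1 Hp).
rewrite /= take_index_rcons // last_rcons -[x in gamma E x x]/(last x [::]).
by rewrite path_gamma //; case: (take _ _).
Qed.

Lemma path_uniq p : is_path E p -> uniq p.
Proof.
elim: p => [|x [|y s] IH] //= Hp; rewrite path_notin //=.
exact/IH/(path_behead Hp).
Qed.

Lemma gamma_uniq x y : uniq (gamma E x y).
Proof. exact/path_uniq/gamma_path. Qed.

Lemma gamma_prefix x y u : u \in gamma E x y ->
  gamma E x u = take (index u (gamma E x y)).+1 (gamma E x y).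
Proof.
have [s Hs _] := gamma_cons x y; rewrite Hs => us; apply: gamma_eq; split.
- by have := gamma_path x y; rewrite Hs => /(path_take (index u (x :: s))).
- by [].
- by rewrite take_index_rcons // last_rcons.
Qed.

Lemma gamma_suffix x y u : u \in gamma E x y ->
  gamma E u y = drop (index u (gamma E x y)) (gamma E x y).
Proof.
have [s Hs Hl] := gamma_cons x y.
set G := gamma E x y; set i := index u G => uG.
have Hd : drop i G = u :: drop i.+1 G by exact: drop_index.
apply: gamma_eq; split; rewrite ?Hd //.
- by rewrite -Hd path_drop ?index_mem ?gamma_path.
- rewrite -Hl -[last x s]/(last x (x :: s)) -Hs.
  by rewrite -(cat_take_drop i (gamma E x y)) last_cat Hd.
Qed.

Lemma gamma_split x y u : u \in gamma E x y ->
  gamma E x y = gamma E x u ++ behead (gamma E u y).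
Proof.
by move=> uG; rewrite (gamma_prefix uG) (gamma_suffix uG) drop_index //= cat_take_drop.
Qed.

Lemma gamma_rev x y : gamma E y x = rev (gamma E x y).
Proof.
have [s Hs Hl] := gamma_cons x y; apply: gamma_eq; split.
- exact/path_rev/gamma_path.
- by rewrite Hs (lastI x s) rev_rcons Hl.
- by rewrite Hs rev_cons last_rcons.
Qed.

Lemma gamma_edge x y : [set x; y] \in E -> gamma E x y = [:: x; y].
Proof. by move=> He; apply: gamma_eq; split; rewrite //= /pedges /= He. Qed.

Lemma path_second (x y : T) s :
  is_path E (x :: s) -> y \in s -> [set x; y] \in E -> s = y :: behead s.
Proof.
move=> Hp ys He; have yG : y \in gamma E x (last x s).
  by rewrite path_gamma // in_cons ys orbT.
move: (gamma_prefix yG); rewrite gamma_edge // path_gamma //= (negbTE (edge_neq He)).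
by case: s ys {Hp yG} => [|z s] //= _ [-> _].
Qed.

Lemma gamma_edge_cases a b z : [set a; b] \in E ->
  gamma E a z = a :: gamma E b z \/ gamma E b z = b :: gamma E a z.
Proof.
move=> He; have [s Hs Hl] := gamma_cons b z; have Hp := gamma_path b z.
rewrite Hs in Hp; have [Hin|Hnin] := boolP ([set a; b] \in pedges b s).
  have Hs' : s = a :: behead s.
    apply: path_second Hp _ _; last by rewrite setUC.
    have := mem_pedges Hin (set21 a b).
    by rewrite in_cons (negbTE (edge_neq He)).
  right; rewrite Hs; congr cons; symmetry; apply: gamma_eq.
  by rewrite Hs' in Hp Hl *; split => //; apply: path_behead Hp.
left; rewrite Hs; apply: gamma_eq; split => //=.
by move: Hp; rewrite /= /pedges /= He Hnin.
Qed.

Lemma gamma_edge_mem a b z : [set a; b] \in E -> b \in gamma E a z ->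
  gamma E a z = a :: gamma E b z.
Proof.
move=> He bG; have [//|Hb] := gamma_edge_cases z He.
by have := gamma_uniq b z; rewrite Hb /= bG.
Qed.

Lemma path_cat (x : T) s t : is_path E (x :: s) -> is_path E (last x s :: t) ->
  {in t, forall c, c \notin x :: s} -> is_path E (x :: s ++ t).
Proof.
move=> /andP[Hs Us] /andP[Ht Ut] disj.
rewrite /= pedges_cat all_cat cat_uniq Hs Ht Us Ut /= andbT.
apply/hasPn => e et; apply/negP => es.
have [c ce cz] := edge_other (last x s) (allP Ht e et).
have := mem_pedges et ce; rewrite in_cons (negbTE cz) => /disj.
by rewrite (mem_pedges es ce).
Qed.

Lemma gamma_cat r z t : is_path E (z :: t) -> head z t \notin gamma E r z ->
  gamma E r (last z t) = gamma E r z ++ t.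
Proof.
move=> Hzt Hh; have disj : {in t, forall w, w \notin gamma E r z}.
  (* otherwise head t, which lies on gamma z w, lies on gamma w z, a suffix of gamma r z *)
  move=> w wt; apply: contra Hh => wG.
  have wz : z != w by apply: contraTneq wt => <-; apply: path_notin.
  have wZ : w \in gamma E z (last z t) by rewrite path_gamma // in_cons wt orbT.
  have yw : head z t \in gamma E z w.
    rewrite (gamma_prefix wZ) path_gamma //= (negbTE wz).
    by case: t wt {Hzt wZ} => [|y t] //= _; rewrite !in_cons eqxx orbT.
  apply: (mem_drop (n0 := index w (gamma E r z))).
  by rewrite -(gamma_suffix wG) gamma_rev mem_rev.
have [s Hs Hl] := gamma_cons r z.
have Hrst : is_path E (r :: s ++ t) by apply: path_cat; rewrite -?Hs ?Hl ?gamma_path.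
by rewrite Hs -Hl -last_cat path_gamma.
Qed.

Lemma path_edges_gamma_split x y u : u \in gamma E x y ->
  path_edges (gamma E x y) = path_edges (gamma E x u) ++ path_edges (gamma E u y).
Proof.
move=> /gamma_split ->; have [s -> <-] := gamma_cons x u.
by have [t -> _] := gamma_cons (last x s) y; rewrite /= pedges_cat.
Qed.

Lemma gamma_neighbours r z x y : [set z; x] \in E -> [set z; y] \in E -> x != y ->
  (x \notin gamma E r z) || (y \notin gamma E r z).
Proof.
move=> Hx Hy; apply: contraR; rewrite negb_or !negbK -!(mem_rev (gamma E r z)).
rewrite -gamma_rev => /andP[/(gamma_edge_mem Hx) Gx /(gamma_edge_mem Hy)].
rewrite Gx => -[]; have [s -> _] := gamma_cons x r; have [t -> _] := gamma_cons y r.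
by case=> ->.
Qed.

Lemma tlt_path_end r z t : is_path E (z :: t) -> t != [::] ->
  head z t \notin gamma E r z -> tlt E r z (last z t).
Proof.
move=> Hp t0 Hh; rewrite /tlt (gamma_cat Hp Hh) mem_cat mem_gamma_last andbT.
apply: contraTneq (path_notin Hp) => ->; rewrite negbK.
by case: t t0 {Hp Hh} => // y t _; rewrite /= mem_last.
Qed.

Lemma path_interior_ancestor r x l z y t : is_path E (x :: l ++ z :: y :: t) ->
  tlt E r z x \/ tlt E r z (last y t).
Proof.
move=> Hp; have Pr : is_path E (z :: y :: t) := path_suffix (s := x :: l) Hp.
have Pl : is_path E (z :: rev (x :: l)).
  move: Hp; rewrite -cat_rcons => /path_prefix.
  by rewrite -rev_rcons -rcons_cons => /path_rev.
have Hrev : rev (x :: l) = last x l :: rev (belast x l) by rewrite lastI rev_rcons.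
have Ex : last z (rev (x :: l)) = x by rewrite rev_cons last_rcons.
have Ezy : [set z; y] \in E by case/andP: Pr => /andP[].
have Ezx1 : [set z; last x l] \in E by move: Pl; rewrite Hrev => /andP[/andP[]].
have x1y : last x l != y.
  have := path_uniq Hp; rewrite -cat_cons cat_uniq => /and3P[_ /hasPn disj _].
  have yR : y \in z :: y :: t by rewrite in_cons mem_head orbT.
  by apply: contraTneq (disj y yR) => <-; rewrite negbK mem_last.
(* gamma r z continues along the side whose neighbour of z it avoids *)
case/orP: (gamma_neighbours r Ezx1 Ezy x1y) => [H|H]; [left; rewrite -Ex | right].
  by apply: tlt_path_end => //; rewrite Hrev.
exact: (@tlt_path_end r z (y :: t) Pr isT H).
Qed.

End Trees.

Lemma qinc_unique (T : finType) (q : {set T} -> T -> int) (eps : {set T}) (g : seq T) u :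
  u \in g -> u \in eps -> {in g, forall w, w \in eps -> w = u} ->
  qinc q eps g = q eps u.
Proof.
move=> ug ue Hu; rewrite /qinc; case: pickP => [w /andP[wg we] | /(_ u)].
  by rewrite (Hu w wg we).
by rewrite ug ue.
Qed.

Lemma qinc_cons_notin (T : finType) (q : {set T} -> T -> int) (eps : {set T})
    (a : T) g :
  a \notin eps -> qinc q eps (a :: g) = qinc q eps g.
Proof.
move=> ae; rewrite /qinc (@eq_pick _ _ (fun u => (u \in g) && (u \in eps))) // => u.
by rewrite in_cons; case: eqVneq => [->|] /=; rewrite ?(negbTE ae) ?andbF.
Qed.

Section Incidence.
Variables (T : finType) (E : {set {set T}}) (q : {set T} -> T -> int).
Hypothesis Htree : is_tree [set: T] E.

Definition incident_prod (g : seq T) : int :=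
  \prod_(eps in E | incident E eps g) qinc q eps g.

Definition incident_prod_off (e : {set T}) (g : seq T) : int :=
  \prod_(eps in E | incident E eps g && (eps != e)) qinc q eps g.

Variables (a b : T) (s : seq T).
Hypothesis Hp : is_path E (a :: b :: s).
Let e := [set a; b].

Lemma edge_off_path eps : eps \in E -> a \in eps -> eps != e ->
  {in b :: s, forall u, u \notin eps}.
Proof.
move=> epsE ae ne u us; apply/negP => ue.
have au : a != u by apply: contraTneq us => <-; exact: (path_notin Htree Hp).
have Heps := edge_eq Htree epsE ae ue au.
have Hau : [set a; u] \in E by rewrite -Heps.
have [bu] := path_second Htree Hp us Hau.
by rewrite Heps -bu eqxx in ne.
Qed.

Lemma not_incident_behead eps : eps \in E -> a \in eps -> eps != e ->
  ~~ incident E eps (b :: s).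
Proof.
move=> epsE ae ne; apply/and3P => -[_ _ /hasP[u us ue]].
by have /negP := edge_off_path epsE ae ne us.
Qed.

Lemma incident_path_cons eps : eps \in E ->
  incident E eps (a :: b :: s) = (eps != e) && ((a \in eps) || incident E eps (b :: s)).
Proof.
move=> epsE; rewrite /incident /= epsE in_cons negb_or -andbA /=.
have [ae|] := boolP (a \in eps); rewrite ?andbT //=.
suff -> : eps \notin pedges b s by rewrite andbT.
by apply: contra (path_notin Htree Hp) => /mem_pedges; apply.
Qed.

Lemma incident_prod_path_cons :
  incident_prod (a :: b :: s) = Qf E q e a * incident_prod_off e (b :: s).
Proof.
rewrite /incident_prod /incident_prod_off.
rewrite (bigID (fun eps : {set T} => a \in eps)) /=; congr (_ * _).
  apply: eq_big => [eps|eps /andP[/andP[epsE]]].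
    case: (boolP (eps \in E)) => //= epsE; rewrite incident_path_cons //.
    by case: (a \in eps); rewrite ?andbT ?andbF.
  rewrite incident_path_cons // => /andP[ne _] ae.
  apply: qinc_unique; rewrite ?mem_head // => w.
  rewrite in_cons => /predU1P[-> //|ws we].
  by have /negP := edge_off_path epsE ae ne ws.
apply: eq_big => [eps|eps /andP[_ ae]]; last exact: qinc_cons_notin.
case: (boolP (eps \in E)) => //= epsE; rewrite incident_path_cons //.
have [ae|_] := boolP (a \in eps); last by rewrite /= andbT andbC.
rewrite andbF; case: (eqVneq eps e) => [_|ne]; first by rewrite andbF.
by rewrite (negbTE (not_incident_behead epsE ae ne)).
Qed.

Lemma incident_prod_behead :
  incident_prod (b :: s) = q e b * incident_prod_off e (b :: s).
Proof.
have /andP[/andP[eE _] /andP[eNs _]] := Hp.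
rewrite /incident_prod (bigD1 e) /=; last by rewrite eE /incident eE eNs /= set22.
congr (_ * _); last by apply: eq_bigl => eps; rewrite andbA.
apply: qinc_unique; rewrite ?mem_head ?set22 // => w ws.
rewrite in_set2 => /orP[/eqP wa|/eqP //].
by have := path_notin Htree Hp; rewrite -wa ws.
Qed.

End Incidence.

Section Parents.
Variables (T : finType) (E : {set {set T}}) (r : T).
Hypothesis Htree : is_tree [set: T] E.

Definition tree_parent (p v : T) : Prop := gamma E r v = rcons (gamma E r p) v.

Lemma tree_parent_exists v : v != r -> exists p, tree_parent p v.
Proof.
have [s Hs Hl] := gamma_cons Htree r v.
case/lastP: s Hs Hl => [|h w] Hs; first by move=> /= ->; rewrite eqxx.
rewrite last_rcons => Hw _; subst w; exists (last r h).
rewrite /tree_parent Hs -rcons_cons; congr rcons; apply/esym/(path_gamma Htree).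
by have := gamma_path Htree r v; rewrite Hs -cats1 => /path_prefix.
Qed.

Lemma tlt_parent z w : tlt E r z w -> exists c, tree_parent z c.
Proof.
case/andP => zw zG; have [t Ht Hl] := gamma_cons Htree z w.
case: t Ht Hl => [|c t] Ht Hl; first by rewrite -Hl eqxx in zw.
have := gamma_path Htree r w; rewrite (gamma_split Htree zG) Ht /=.
have [h Hg _] := gamma_cons Htree r z; rewrite Hg -cat_rcons => /path_prefix Hp.
exists c; rewrite /tree_parent Hg; apply: (gamma_eq Htree).
by split; rewrite //= last_rcons.
Qed.

Lemma ancestor_closed_connected (S : {set T}) :
  (forall z w, w \in S -> tlt E r z w -> z \in S) -> connected E S.
Proof.
move=> Hcl x s Hp xS yS [|i] // /andP[_ Hi] /=.
have Hs : s = take i s ++ nth x s i :: nth x s i.+1 :: drop i.+2 s.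
  by rewrite -(drop_nth x Hi) -drop_nth ?cat_take_drop // ltnW.
set z := nth x s i in Hs *; move: Hp yS; rewrite Hs last_cat /=.
move=> /(path_interior_ancestor Htree r) [] Hz yS.
- exact: Hcl xS Hz.
- exact: Hcl yS Hz.
Qed.

Variables (p v : T).
Hypothesis Hpv : tree_parent p v.

Lemma parent_notin : v \notin gamma E r p.
Proof. by have := gamma_uniq Htree r v; rewrite Hpv rcons_uniq => /andP[]. Qed.

Lemma parent_path_edges :
  path_edges (gamma E r v) = rcons (path_edges (gamma E r p)) [set p; v].
Proof.
have [s Hs Hl] := gamma_cons Htree r p.
by rewrite Hpv Hs /= pedges_rcons Hl.
Qed.

Lemma parent_edge : [set p; v] \in E.
Proof.
apply: path_edges_sub (gamma_path Htree r v) _.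
by rewrite parent_path_edges mem_rcons mem_head.
Qed.

Lemma gamma_parent_cat a : v \in gamma E r a -> gamma E r a = gamma E r p ++ gamma E v a.
Proof.
move=> vG; rewrite (gamma_split Htree vG) Hpv.
by have [s -> _] := gamma_cons Htree v a; rewrite cat_rcons.
Qed.

Lemma gamma_parent_below a : v \in gamma E r a -> gamma E p a = p :: gamma E v a.
Proof.
move=> /gamma_parent_cat HG.
have [s Hs Hl] := gamma_cons Htree r p.
have Hsplit : gamma E r a = belast r s ++ p :: gamma E v a.
  by rewrite HG Hs lastI Hl cat_rcons.
apply: (gamma_eq Htree); split => //.
  by apply: (@path_suffix _ _ (belast r s)); rewrite -Hsplit gamma_path.
by have [t -> <-] := gamma_cons Htree v a.
Qed.

Lemma gamma_parent_notbelow a : v \notin gamma E r a -> gamma E v a = v :: gamma E p a.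
Proof.
have Hvp : [set v; p] \in E by rewrite setUC parent_edge.
case: (gamma_edge_cases Htree a Hvp) => // Hp vG; case/negP: vG.
have [t Ht <-] := gamma_cons Htree v a.
have Hpt : is_path E (p :: v :: t) by rewrite -Ht -Hp gamma_path.
rewrite -[last v t]/(last p (v :: t)) (gamma_cat Htree Hpt) ?parent_notin //.
by rewrite mem_cat mem_head orbT.
Qed.

End Parents.

Section EdgeIdentity.
Variables (T : finType) (E : {set {set T}}) (f : T -> int) (q : {set T} -> T -> int).
Hypothesis Htree : is_tree [set: T] E.

Lemma xf_gamma_cons x y c : gamma E x c = x :: gamma E y c ->
  let w := f c * incident_prod_off E q [set x; y] (gamma E y c) in
  xf E f q x c = Qf E q [set x; y] x * w /\ xf E f q y c = q [set x; y] y * w.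
Proof.
move=> Hx; have [t Ht _] := gamma_cons Htree y c.
have Hp : is_path E (x :: y :: t) by rewrite -Ht -Hx gamma_path.
rewrite /xf -!/(incident_prod _ _ _) Hx Ht.
rewrite (incident_prod_path_cons q Htree Hp) (incident_prod_behead q Htree Hp).
by split; ring.
Qed.

Variables (r p v : T).
Hypothesis Hpv : tree_parent E r p v.
Let e := [set p; v].

Lemma xf_parent a :
  q e p * xf E f q v a =
  Qf E q e v * xf E f q p a +
  detf E q p v *
    (if v \in gamma E r a then f a * incident_prod_off E q e (gamma E v a) else 0).
Proof.
rewrite /detf -/e; case: ifP => vG.
  by have [-> ->] := xf_gamma_cons (gamma_parent_below Htree Hpv vG); ring.
have [] := xf_gamma_cons (gamma_parent_notbelow Htree Hpv (negbT vG)).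
by rewrite setUC -/e => -> ->; ring.
Qed.

End EdgeIdentity.

Lemma sign_propagate (R : realDomainType) (k Q d N N' D : R) :
  k * N' = Q * N + d * D -> 0 < k -> 0 < Q -> d < 0 -> 0 <= D ->
  [/\ N < 0 -> N' < 0, N <= 0 -> N' <= 0 & N <= 0 -> 0 < D -> N' < 0].
Proof. by move=> *; split=> *; nra. Qed.

Section DecoratedTree.
Variables (T : finType) (V A : {set T}) (E : {set {set T}}).
Variables (f : T -> int) (q : {set T} -> T -> int) (v0 : T).
Hypothesis Hdt : decorated_tree V A E f q.

Let Htree : is_tree [set: T] E. Proof. by case: Hdt. Qed.

Lemma arrow_edge_uniq u e1 e2 : u \in A -> e1 \in E -> e2 \in E ->
  u \in e1 -> u \in e2 -> e1 = e2.
Proof.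
case: Hdt => _ _ Harr _ _ /Harr /eqP /cards1P [e He] e1E e2E ue1 ue2.
have : e1 \in [set e in E | u \in e] by rewrite inE e1E ue1.
have : e2 \in [set e in E | u \in e] by rewrite inE e2E ue2.
by rewrite He !in_set1 => /eqP -> /eqP ->.
Qed.

Lemma nonarrow_vertex u : u \notin A -> u \in V.
Proof.
case: Hdt => -[_ HVA] _ _ _ _ uA.
have : u \in V :|: A by rewrite HVA in_setT.
by rewrite in_setU (negbTE uA) orbF.
Qed.

Lemma vertex_nonarrow u : u \in V -> u \notin A.
Proof. by case: Hdt => -[HVA _] _ _ _ _ uV; rewrite (disjointFr HVA uV). Qed.

Lemma path_incident_vertex g eps u : is_path E g -> (1 < size g)%N ->
  u \in g -> eps \in E -> u \in eps -> eps \notin path_edges g -> u \in V.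
Proof.
case: g => [|x s] // Hg s0 ug epsE ue epsg.
apply: nonarrow_vertex; apply/negP => uA.
have [|e' He' ue'] := pedges_cover _ ug; first by case: s s0 {Hg ug epsg}.
by rewrite (arrow_edge_uniq uA epsE (path_edges_sub Hg He') ue ue') He' in epsg.
Qed.

Hypothesis Hrt : is_root V A E f q v0.
Hypothesis Hneg : negative_determinants V E q.
Hypothesis Hf : forall a, a \in A -> 0 <= f a.
Let N := Nf A E f q.

Lemma root_q_ge1 v e : v \in V -> e \in E -> v \in e ->
  e \notin path_edges (gamma E v0 v) -> 1 <= q e v.
Proof.
case: Hrt => _ Hv0 Hroot vV eE ve; have [vv0|vv0] := eqVneq v v0.
  by rewrite vv0 Hv0 // -vv0.
exact: (Hroot v vV vv0).1.
Qed.

Lemma parent_vertex p v : tree_parent E v0 p v -> p \in V.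
Proof.
move=> Hpv; have [s Hs Hl] := gamma_cons Htree v0 p.
case: s Hs Hl => [|y s] Hs Hl; first by case: Hrt; rewrite -Hl.
apply: (path_incident_vertex (eps := [set p; v]) (gamma_path Htree v0 p) _
  (mem_gamma_last Htree v0 p)).
- by rewrite Hs.
- exact: (parent_edge Htree Hpv).
- exact: set21.
- exact: (notin_path_edges (set22 p v) (parent_notin Htree Hpv)).
Qed.

Section ParentStep.
Variables (p v : T).
Hypotheses (Hpv : tree_parent E v0 p v) (vV : v \in V).
Let e := [set p; v].

Lemma parent_q_gt0 : 0 < q e p.
Proof.
apply: lt_le_trans (root_q_ge1 _ _ _ _) => //.
- exact: (parent_vertex Hpv).
- exact: (parent_edge Htree Hpv).
- exact: set21.
- exact: (notin_path_edges (set22 p v) (parent_notin Htree Hpv)).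
Qed.

Lemma child_Qf_gt0 : 0 < Qf E q e v.
Proof.
apply: prodr_gt0 => e' /andP[e'E /andP[ve' ne']].
apply: lt_le_trans (root_q_ge1 vV e'E ve' _) => //.
rewrite (parent_path_edges Htree Hpv) mem_rcons in_cons (negbTE ne') /=.
exact: (notin_path_edges ve' (parent_notin Htree Hpv)).
Qed.

Lemma incident_prod_off_gt0 a : a \in A -> v \in gamma E v0 a ->
  0 < incident_prod_off E q e (gamma E v a).
Proof.
move=> aA vG; have HG := gamma_parent_cat Htree Hpv vG.
apply: prodr_gt0 => eps /andP[epsE /andP[Hinc ne]].
rewrite /qinc; case: pickP => [u /andP[ug ue] /= | //].
have [t Ht Hl] := gamma_cons Htree v a.
have uV : u \in V.
  apply: (path_incident_vertex (gamma_path Htree v a) _ ug epsE ue);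
    last by case/and3P: Hinc.
  rewrite Ht; case: t Ht Hl => // Ht /= Hva.
  by have := vertex_nonarrow vV; rewrite Hva aA.
have uG : u \in gamma E v0 a by rewrite HG mem_cat ug orbT.
apply: lt_le_trans (root_q_ge1 uV epsE ue _) => //.
have Hsub : eps \in path_edges (gamma E v0 u) -> eps \in path_edges (gamma E v0 a).
  by rewrite (path_edges_gamma_split Htree uG) mem_cat => ->.
apply: contra Hsub _.
rewrite (path_edges_gamma_split Htree vG) (parent_path_edges Htree Hpv).
rewrite mem_cat mem_rcons in_cons (negbTE ne) /= negb_or; apply/andP; split.
  apply: (notin_path_edges ue).
  by have := gamma_uniq Htree v0 a; rewrite HG cat_uniq => /and3P[_ /hasPn /(_ u ug)].
by case/and3P: Hinc.
Qed.

Let below_term a :=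
  if v \in gamma E v0 a then f a * incident_prod_off E q e (gamma E v a) else 0.
Let below_sum := \sum_(a in A | f a != 0) below_term a.

Lemma Nf_parent : q e p * N v = Qf E q e v * N p + detf E q p v * below_sum.
Proof.
rewrite /N /Nf /below_sum !mulr_sumr -big_split /=.
by apply: eq_bigr => a _; apply: (xf_parent f q Htree Hpv).
Qed.

Lemma below_term_ge0 a : a \in A -> 0 <= below_term a.
Proof.
move=> aA; rewrite /below_term; case: ifP => // vG.
exact: mulr_ge0 (Hf aA) (ltW (incident_prod_off_gt0 aA vG)).
Qed.

Lemma below_sum_gt0 :
  (exists2 a, (a \in A) && (f a != 0) & v \in gamma E v0 a) -> 0 < below_sum.
Proof.
case=> a /andP[aA fa] vG; rewrite /below_sum (bigD1 a) ?aA //=.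
apply: ltr_wpDr.
  by apply: sumr_ge0 => b /andP[/andP[bA _] _]; exact: below_term_ge0.
rewrite /below_term vG; apply: mulr_gt0 (incident_prod_off_gt0 aA vG).
by rewrite lt_def fa Hf.
Qed.

Lemma Nf_parent_step :
  [/\ N p < 0 -> N v < 0, N p <= 0 -> N v <= 0 &
      N p <= 0 -> (exists2 a, (a \in A) && (f a != 0) & v \in gamma E v0 a) -> N v < 0].
Proof.
have Hdet := Hneg (parent_vertex Hpv) vV (parent_edge Htree Hpv).
have Hsum : 0 <= below_sum by apply: sumr_ge0 => a /andP[aA _]; exact: below_term_ge0.
have [S1 S2 S3] := sign_propagate Nf_parent parent_q_gt0 child_Qf_gt0 Hdet Hsum.
by split=> // Np /below_sum_gt0; apply: S3.
Qed.

End ParentStep.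

Lemma ancestor_vertex z w : tlt E v0 z w -> z \in V.
Proof. by case/(tlt_parent Htree) => c /parent_vertex. Qed.

Lemma Nf_ancestor v w : w \in V -> tlt E v0 v w ->
  [/\ N v < 0 -> N w < 0, N v <= 0 -> N w <= 0 &
      N v <= 0 -> (exists2 a, (a \in A) && (f a != 0) & tlt E v0 w a) -> N w < 0].
Proof.
have [n] := ubnP (size (gamma E v0 w)); elim: n w => // n IH w.
rewrite ltnS => Hsz wV /andP[vw vG].
have wv0 : w != v0.
  by apply: contraNneq vw => wv0; move: vG; rewrite wv0 (gamma_refl Htree) mem_seq1.
have [p Hpw] := tree_parent_exists Htree wv0.
have [S1 S2 S3] := Nf_parent_step Hpw wV.
have Hbelow : (exists2 a, (a \in A) && (f a != 0) & tlt E v0 w a) ->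
    exists2 a, (a \in A) && (f a != 0) & w \in gamma E v0 a.
  by case=> a Ha /andP[_ wG]; exists a.
have [->|vp] := eqVneq v p.
  by split=> // Np /Hbelow; apply: S3.
have vGp : v \in gamma E v0 p by move: vG; rewrite Hpw mem_rcons in_cons (negbTE vw).
have Hszp : (size (gamma E v0 p) < n)%N by move: Hsz; rewrite Hpw size_rcons.
have [I1 I2 _] := IH p Hszp (parent_vertex Hpw) (introT andP (conj vp vGp)).
by split=> [/I1/S1 | /I2/S2 | /I2/S3 HS /Hbelow/HS].
Qed.

End DecoratedTree.

Theorem corollary5p9 (T : finType) (V A : {set T}) (E : {set {set T}})
  (f : T -> int) (q : {set T} -> T -> int) (v0 : T) :
  decorated_rooted_tree V A E f q v0 ->
  negative_determinants V E q ->
  (forall a, a \in A -> 0 <= f a) ->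
  [/\ (forall v v', v \in V -> v' \in V -> tlt E v0 v v' ->
        [/\ Nf A E f q v < 0 -> Nf A E f q v' < 0,
            Nf A E f q v <= 0 -> Nf A E f q v' <= 0 &
            (Nf A E f q v <= 0 ->
             (exists2 a, (a \in A) && (f a != 0) & tlt E v0 v' a) ->
             Nf A E f q v' < 0)]),
      connected E [set v in V | 0 <= Nf A E f q v] &
      connected E [set v in V | 0 < Nf A E f q v]].
Proof.
move=> [Hdt Hrt] Hneg Hf; have Htree : is_tree [set: T] E by case: Hdt.
have Hanc := Nf_ancestor Hdt Hrt Hneg Hf.
split; first by move=> v w _; apply: Hanc.
- apply: (ancestor_closed_connected Htree) => z w; rewrite !inE => /andP[wV Nw] zw.
  have [Hlt _ _] := Hanc z w wV zw.
  rewrite (ancestor_vertex Hdt Hrt zw) leNgt.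
  by apply: contraL Nw => /Hlt; rewrite -ltNge.
- apply: (ancestor_closed_connected Htree) => z w; rewrite !inE => /andP[wV Nw] zw.
  have [_ Hle _] := Hanc z w wV zw.
  rewrite (ancestor_vertex Hdt Hrt zw) ltNge.
  by apply: contraL Nw => /Hle; rewrite -leNgt.
Qed.
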